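(* Let $n,p$ be positive integers, $X\in\mathbb{R}^{n\times p}$, $\mathbf y\in\mathbb{R}^n$, $\delta>0$ and $\lambda>0$. The function $g_\lambda:\mathbb{R}^p\to\mathbb{R}$, $g_\lambda(\mathbf w)=f_\lambda(\mathbf t(\mathbf w))$, is continuous at every point $\mathbf w\in\mathbb{R}^p$.
   Context: For $\mathbf t\in[0,1]^p$, $T_{\mathbf t}=\mathrm{Diag}(t_1,\dots,t_p)$, $X_{\mathbf t}=XT_{\mathbf t}$, $L_{\mathbf t}=\frac1n[X_{\mathbf t}^\top X_{\mathbf t}+\delta(I-T_{\mathbf t}^2)]$ with $I$ the $p\times p$ identity, $\widetilde{\boldsymbol\beta}_{\mathbf t}:=L_{\mathbf t}^{+}\left(X_{\mathbf t}^\top\mathbf y/n\right)$ with $L_{\mathbf t}^+$ the Moore–Penrose pseudo-inverse, and $f_\lambda(\mathbf t)=\frac1n\|\mathbf y-X_{\mathbf t}\widetilde{\boldsymbol\beta}_{\mathbf t}\|_2^2+\lambda\sum_{j=1}^p t_j$. The map $\mathbf t(\mathbf w)$ is defined coordinatewise by $t_j(w_j)=1-\exp(-w_j^2)$, $j=1,\dots,p$. *)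

From HB Require Import structures.
From mathcomp Require Import all_boot all_order all_algebra.
From mathcomp Require Import all_classical all_reals all_analysis.
Set Implicit Arguments. Unset Strict Implicit. Unset Printing Implicit Defensive.
Import Order.TTheory GRing.Theory Num.Theory.
Import numFieldNormedType.Exports.
Local Open Scope ring_scope.
Local Open Scope classical_set_scope.

Section Defs.
Variable R : realType.

Definition penrose_conditions (m k : nat) (A : 'M[R]_(m, k)) (B : 'M[R]_(k, m)) : Prop :=
  [/\ A *m B *m A = A, B *m A *m B = B, (A *m B)^T = A *m B & (B *m A)^T = B *m A].

(* Moore-Penrose pseudo-inverse: the (unique, existing) matrix satisfying the
   Penrose conditions. *)
Definition mp_pinv (m k : nat) (A : 'M[R]_(m, k)) : 'M[R]_(k, m) :=
  xget 0 (penrose_conditions A).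

Definition Tmat (p : nat) (t : 'rV[R]_p) : 'M[R]_p := diag_mx t.

Definition Xt (n p : nat) (X : 'M[R]_(n, p)) (t : 'rV[R]_p) : 'M[R]_(n, p) :=
  X *m Tmat t.

Definition Lt (n p : nat) (X : 'M[R]_(n, p)) (delta : R) (t : 'rV[R]_p) : 'M[R]_p :=
  n%:R^-1 *: ((Xt X t)^T *m Xt X t + delta *: (1%:M - Tmat t *m Tmat t)).

Definition beta_t (n p : nat) (X : 'M[R]_(n, p)) (y : 'cV[R]_n) (delta : R)
  (t : 'rV[R]_p) : 'cV[R]_p :=
  mp_pinv (Lt X delta t) *m (n%:R^-1 *: ((Xt X t)^T *m y)).

Definition sqnorm (n : nat) (v : 'cV[R]_n) : R := \sum_(i < n) v i 0 ^+ 2.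

Definition f_lambda (n p : nat) (X : 'M[R]_(n, p)) (y : 'cV[R]_n) (delta lambda : R)
  (t : 'rV[R]_p) : R :=
  n%:R^-1 * sqnorm (y - Xt X t *m beta_t X y delta t) + lambda * \sum_(j < p) t 0 j.

Definition t_of_w (p : nat) (w : 'rV[R]_p) : 'rV[R]_p :=
  \row_(j < p) (1 - expR (- (w 0 j ^+ 2))).

Definition g_lambda (n p : nat) (X : 'M[R]_(n, p)) (y : 'cV[R]_n) (delta lambda : R)
  (w : 'rV[R]_p) : R :=
  f_lambda X y delta lambda (t_of_w w).

End Defs.

(** Where every |t_j| < 1 the matrix L_t is positive definite: its quadratic
    form is |X_t v|^2 / n plus delta/n sum_j (1 - t_j^2) v_j^2.  There the
    Moore-Penrose pseudo-inverse is the ordinary inverse adj(L_t) / det(L_t),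
    a rational function of the entries with non-vanishing denominator.  Since
    t(w) takes values in [0,1), g_lambda is obtained from continuous functions
    of w by sums, products, transposes and such inverses. *)

From HB Require Import structures.
From mathcomp Require Import all_boot all_order all_algebra.
From mathcomp Require Import all_classical all_reals all_analysis.
From mathcomp Require Import lra.
Set Implicit Arguments. Unset Strict Implicit. Unset Printing Implicit Defensive.
Import Order.TTheory GRing.Theory Num.Theory.
Import numFieldNormedType.Exports.
Local Open Scope ring_scope.

Section EntrywiseContinuity.
Context {R : numFieldType} {T : topologicalType}.

Definition continuous_mx a b (M : T -> 'M[R]_(a, b)) :=
  forall i j, continuous (fun x => M x i j).

Lemma continuous_sumr (I : Type) (r : seq I) (P : pred I) (F : I -> T -> R) :
  (forall i, P i -> continuous (F i)) ->
  continuous (fun x => \sum_(i <- r | P i) F i x).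
Proof. exact/continuous_big/add_continuous. Qed.

Lemma continuous_prodr (I : Type) (r : seq I) (P : pred I) (F : I -> T -> R) :
  (forall i, P i -> continuous (F i)) ->
  continuous (fun x => \prod_(i <- r | P i) F i x).
Proof. exact/continuous_big/mul_continuous. Qed.

Lemma continuous_oppr (f : T -> R) : continuous f -> continuous (fun x => - f x).
Proof. by move=> cf x; exact: (continuousN (cf x)). Qed.

Lemma continuous_mulr (f g : T -> R) :
  continuous f -> continuous g -> continuous (fun x => f x * g x).
Proof. by move=> cf cg x; exact: (continuousM (cf x) (cg x)). Qed.

Lemma continuous_addr (f g : T -> R) :
  continuous f -> continuous g -> continuous (fun x => f x + g x).
Proof. by move=> cf cg x; exact: (continuousD (cf x) (cg x)). Qed.

Lemma continuous_mx_cst a b (A : 'M[R]_(a, b)) : continuous_mx (fun _ => A).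
Proof. by move=> i j; exact: cst_continuous. Qed.

Lemma continuous_mxD a b (A B : T -> 'M[R]_(a, b)) :
  continuous_mx A -> continuous_mx B -> continuous_mx (fun x => A x + B x).
Proof.
by move=> cA cB i j; under eq_fun do rewrite mxE; exact: continuous_addr.
Qed.

Lemma continuous_mxN a b (A : T -> 'M[R]_(a, b)) :
  continuous_mx A -> continuous_mx (fun x => - A x).
Proof. by move=> cA i j; under eq_fun do rewrite mxE; exact: continuous_oppr. Qed.

Lemma continuous_mxZ a b (c : T -> R) (A : T -> 'M[R]_(a, b)) :
  continuous c -> continuous_mx A -> continuous_mx (fun x => c x *: A x).
Proof.
by move=> cc cA i j; under eq_fun do rewrite mxE; exact: continuous_mulr.
Qed.

Lemma continuous_trmx a b (A : T -> 'M[R]_(a, b)) :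
  continuous_mx A -> continuous_mx (fun x => (A x)^T).
Proof. by move=> cA i j; under eq_fun do rewrite mxE; exact: cA. Qed.

Lemma continuous_mulmx a b c (A : T -> 'M[R]_(a, b)) (B : T -> 'M[R]_(b, c)) :
  continuous_mx A -> continuous_mx B -> continuous_mx (fun x => A x *m B x).
Proof.
move=> cA cB i j; under eq_fun do rewrite mxE.
by apply: continuous_sumr => k _; exact: continuous_mulr.
Qed.

Lemma continuous_diag_mx a (d : T -> 'rV[R]_a) :
  continuous_mx d -> continuous_mx (fun x => diag_mx (d x)).
Proof.
move=> cd i j; under eq_fun do rewrite mxE.
by case: (i == j); under eq_fun do rewrite ?mulr1n ?mulr0n; [exact: cd | exact: cst_continuous].
Qed.

Lemma continuous_det a (A : T -> 'M[R]_a) :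
  continuous_mx A -> continuous (fun x => \det (A x)).
Proof.
move=> cA; apply: continuous_sumr => s _; apply: continuous_mulr.
  exact: cst_continuous.
by apply: continuous_prodr => i _; exact: cA.
Qed.

Lemma continuous_adj a (A : T -> 'M[R]_a) :
  continuous_mx A -> continuous_mx (fun x => \adj (A x)).
Proof.
case: a A => [|a] A cA i j; first by case: i.
under eq_fun do rewrite mxE /cofactor; apply: continuous_mulr.
  exact: cst_continuous.
by apply: continuous_det => k l; under eq_fun do rewrite !mxE; exact: cA.
Qed.

Lemma continuous_invmx a (A : T -> 'M[R]_a) :
  continuous_mx A -> (forall x, A x \in unitmx) ->
  continuous_mx (fun x => invmx (A x)).
Proof.
move=> cA uA; have -> : (fun x => invmx (A x)) = fun x => (\det (A x))^-1 *: \adj (A x).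
  by apply: funext => x; rewrite /invmx uA.
apply: continuous_mxZ; last exact: continuous_adj.
move=> x; have detA_neq0 : \det (A x) != 0 by rewrite -unitfE -unitmxE.
have detA_cont : {for x, continuous (fun x => \det (A x))} by exact: continuous_det.
exact: (@continuousV _ _ (fun x => \det (A x)) x detA_neq0 detA_cont).
Qed.

End EntrywiseContinuity.

Lemma mp_pinv_unitmx (R : realType) m (A : 'M[R]_m) :
  A \in unitmx -> mp_pinv A = invmx A.
Proof.
move=> uA; apply: xget_unique.
  by split; rewrite ?mulmxV ?mulVmx ?mul1mx ?mulmx1 ?trmx1.
move=> B [ABA _ _ _].
have -> : B = invmx A *m (A *m B *m A) *m invmx A.
  by rewrite !mulmxA mulVmx // mul1mx -mulmxA mulmxV // mulmx1.
by rewrite ABA mulVmx // mul1mx.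
Qed.

Lemma gram_add_diag_unitmx (R : realFieldType) m k (A : 'M[R]_(m, k)) (d : 'rV[R]_k) :
  (forall j, 0 < d 0 j) -> A^T *m A + diag_mx d \in unitmx.
Proof.
move=> d_gt0; rewrite unitmxE unitfE; apply/negP => /det0P [v v_neq0 vM0].
have [j vj_neq0] : exists j, v 0 j != 0.
  apply/existsP; apply: contraNT v_neq0 => /existsPn v0.
  by apply/eqP/rowP => j; rewrite mxE; exact/eqP/negPn/v0.
have gramE : (v *m (A^T *m A) *m v^T) 0 0 = \sum_(i < m) (v *m A^T) 0 i ^+ 2.
  rewrite mulmxA -mulmxA -{2}[A]trmxK -trmx_mul mxE.
  by apply: eq_bigr => i _; rewrite [(_^T) i 0]mxE expr2.
have diagE : (v *m diag_mx d *m v^T) 0 0 = \sum_(l < k) d 0 l * v 0 l ^+ 2.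
  by rewrite mul_mx_diag mxE; apply: eq_bigr => l _; rewrite !mxE expr2 mulrAC mulrC.
have gram_ge0 : 0 <= \sum_(i < m) (v *m A^T) 0 i ^+ 2.
  by apply: sumr_ge0 => i _; exact: sqr_ge0.
have diag_gt0 : 0 < \sum_(l < k) d 0 l * v 0 l ^+ 2.
  rewrite (bigD1 j) //= ltr_pwDl //; first by rewrite mulr_gt0 // exprn_even_gt0.
  by apply: sumr_ge0 => l _; apply: mulr_ge0; [exact: ltW | exact: sqr_ge0].
have := congr1 (fun M => (M *m v^T) 0 0) vM0.
by rewrite /= mulmxDr mulmxDl mxE gramE diagE mul0mx mxE => /eqP; rewrite gt_eqF // ltr_wpDl.
Qed.

Lemma Lt_unitmx (R : realType) n p (X : 'M[R]_(n, p)) (delta : R) (t : 'rV[R]_p) :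
  (0 < n)%N -> 0 < delta -> (forall j, t 0 j ^+ 2 < 1) -> Lt X delta t \in unitmx.
Proof.
move=> n_gt0 delta_gt0 t_lt1.
have diagE : delta *: (1%:M - Tmat t *m Tmat t) = diag_mx (\row_j (delta * (1 - t 0 j ^+ 2))).
  apply/matrixP => i j; rewrite /Tmat mulmx_diag !mxE.
  by case: eqP => _; rewrite ?mulr1n ?mulr0n ?subr0 ?mulr0 ?expr2.
rewrite /Lt diagE unitmxZ ?unitfE ?invr_eq0 ?pnatr_eq0 -?lt0n //.
by apply: gram_add_diag_unitmx => j; rewrite mxE mulr_gt0 // subr_gt0.
Qed.

Lemma t_of_w_sqr_lt1 (R : realType) p (w : 'rV[R]_p) j : t_of_w w 0 j ^+ 2 < 1.
Proof.
rewrite mxE; have e_gt0 := expR_gt0 (- (w 0 j ^+ 2)).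
have e_le1 : expR (- (w 0 j ^+ 2)) <= 1 by rewrite expR_le1 oppr_le0 sqr_ge0.
nra.
Qed.

Lemma continuous_t_of_w (R : realType) p : continuous_mx (@t_of_w R p).
Proof.
move=> i j; under eq_fun do rewrite mxE.
have sqr_cont : continuous (fun w : 'rV[R]_p => - (w 0 j ^+ 2)).
  apply: continuous_oppr; under eq_fun do rewrite expr2.
  by apply: continuous_mulr; exact: coord_continuous.
apply: continuous_addr; first exact: cst_continuous.
apply: continuous_oppr => w.
exact (continuous_comp (sqr_cont w) (@continuous_expR R _)).
Qed.

Lemma continuous_f_lambda_comp (R : realType) (T : topologicalType) n p
    (X : 'M[R]_(n, p)) (y : 'cV[R]_n) (delta lambda : R) (t : T -> 'rV[R]_p) :
  continuous_mx t -> (forall x, Lt X delta (t x) \in unitmx) ->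
  continuous (fun x => f_lambda X y delta lambda (t x)).
Proof.
move=> ct L_unit.
have cX : continuous_mx (fun x => Xt X (t x)).
  by apply: continuous_mulmx; [exact: continuous_mx_cst | exact: continuous_diag_mx].
have cL : continuous_mx (fun x => Lt X delta (t x)).
  apply: continuous_mxZ; first exact: cst_continuous.
  apply: continuous_mxD; first by apply: continuous_mulmx => //; exact: continuous_trmx.
  apply: continuous_mxZ; first exact: cst_continuous.
  apply: continuous_mxD; first exact: continuous_mx_cst.
  by apply: continuous_mxN; apply: continuous_mulmx; exact: continuous_diag_mx.
have cbeta : continuous_mx (fun x => beta_t X y delta (t x)).
  rewrite /beta_t; under [X in continuous_mx X]eq_fun do rewrite mp_pinv_unitmx //.
  apply: continuous_mulmx; first exact: continuous_invmx.
  apply: continuous_mxZ; first exact: cst_continuous.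
  by apply: continuous_mulmx; [exact: continuous_trmx | exact: continuous_mx_cst].
have cres : continuous_mx (fun x => y - Xt X (t x) *m beta_t X y delta (t x)).
  apply: continuous_mxD; first exact: continuous_mx_cst.
  by apply: continuous_mxN; exact: continuous_mulmx.
apply: continuous_addr; apply: continuous_mulr; try exact: cst_continuous.
  apply: continuous_sumr => i _; under eq_fun do rewrite expr2.
  by apply: continuous_mulr; exact: cres.
by apply: continuous_sumr => j _; exact: ct.
Qed.

Theorem corollary1 (R : realType) (n p : nat) (hn : (0 < n)%N) (hp : (0 < p)%N)
  (X : 'M[R]_(n, p)) (y : 'cV[R]_n) (delta lambda : R)
  (hdelta : 0 < delta) (hlambda : 0 < lambda) :
  forall w : 'rV[R]_p, {for w, continuous (g_lambda X y delta lambda)}.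
Proof.
apply: continuous_f_lambda_comp; first exact: continuous_t_of_w.
by move=> w; apply: Lt_unitmx => // j; exact: t_of_w_sqr_lt1.
Qed.
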